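(* Let $m$ be a positive integer and let $\delta$ be a positive divisor of $\lambda(m)$. (1) $\displaystyle\sum_{\substack{a\in U_m\\ \mathrm{ind}_m(a)=1}}a\equiv 1\pmod m$. (2) If $\delta=2$ (so $2\mid\lambda(m)$), then $\displaystyle\sum_{\substack{a\in U_m\\ \mathrm{ind}_m(a)=2}}a\equiv -1\pmod m$. (3) If $4\mid\delta$, then $\displaystyle\sum_{\substack{a\in U_m\\ \mathrm{ind}_m(a)=\delta}}a\equiv 0\pmod m$.
   Context: $U_m$ denotes the set of invertible residue classes in $\mathbb{Z}/m\mathbb{Z}$ (sums run over one representative of each such class). For $a$ coprime to $m$, $\mathrm{ind}_m(a)$ is the multiplicative order of $a$ modulo $m$, i.e. the smallest positive $k$ with $a^k\equiv 1\pmod m$. $\lambda(m)$ is the Carmichael function: the smallest $k>0$ such that $a^k\equiv 1\pmod m$ for all $a\in U_m$. *)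

From mathcomp Require Import all_boot.
Set Implicit Arguments. Unset Strict Implicit. Unset Printing Implicit Defensive.

(* U_m is represented by the residues a < m with coprime a m
   (for m = 1 this is the single class of 0). *)

(* ind_m(a): the smallest positive k with a^k = 1 (mod m).
   For a coprime to m (m > 0) this order is <= totient m <= m, so the
   search over k = 1..m finds it. *)
Definition ind (m a : nat) : nat :=
  (find (fun k => a ^ k.+1 == 1 %[mod m]) (iota 0 m)).+1.

(* lambda(m): smallest positive k with a^k = 1 (mod m) for all a in U_m.
   It divides totient m <= m, so searching k = 1..m finds it. *)
Definition carmichael (m : nat) : nat :=
  (find (fun k => [forall a : 'I_m, coprime a m ==> (a ^ k.+1 == 1 %[mod m])])
        (iota 0 m)).+1.

From mathcomp Require Import all_boot.
From mathcomp Require Import cyclic zify.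

(* Negation a |-> m - a maps units to units and, for m > 2, has no fixed
   point on them, so a set of units closed under negation splits into pairs
   {a, m - a} and its sum is 0 mod m. Since (m - a)^k = a^k (mod m) for even
   k, negation preserves the solutions of a^2 = 1, which are 1 and the
   elements of order 2; this gives (2). If 4 | ind a then ind (m - a) divides
   ind a, while ind a divides 2 ind (m - a), forcing ind (m - a) to be even
   and hence equal to ind a; this gives (3). The hypothesis delta | lambda(m)
   only serves to exclude m <= 2, where lambda(m) = 1. *)

Lemma totient_leq n : totient n <= n.
Proof.
rewrite totient_count_coprime.
apply: (@leq_trans (\sum_(0 <= d < n) 1)); first by apply: leq_sum => d _; exact: leq_b1.
by rewrite sum_nat_const_nat subn0 muln1.
Qed.

Lemma coprime_subn m a : a <= m -> coprime (m - a) m = coprime a m.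
Proof.
by move=> le_am; rewrite /coprime -{2 3}(subnK le_am) gcdnDl gcdnDr gcdnC.
Qed.

Lemma expn_subn_even m a k : a <= m -> ~~ odd k -> (m - a) ^ k = a ^ k %[mod m].
Proof.
move=> le_am even_k; rewrite -(odd_double_half k) (negbTE even_k) add0n -mul2n.
rewrite !expnM -modnXm -[in RHS]modnXm; congr (_ ^ _ %% _).
have sq : (m - a) ^ 2 + a.*2 * m = a ^ 2 + m * m by rewrite !expnS expn0 -mul2n; nia.
by rewrite -(modnMDl a.*2) addnC sq addnC modnMDl.
Qed.

Section Ind.
Variables m a : nat.
Hypotheses (m_gt0 : 0 < m) (coprime_am : coprime a m).

Lemma has_expn_eq1 : has (fun k => a ^ k.+1 == 1 %[mod m]) (iota 0 m).
Proof.
apply/hasP; exists (totient m).-1; last by rewrite /= prednK ?totient_gt0 ?Euler_exp_totient.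
by rewrite mem_iota add0n prednK ?totient_gt0 ?totient_leq.
Qed.

Lemma ind_expn : a ^ ind m a = 1 %[mod m].
Proof.
have := nth_find 0 has_expn_eq1; rewrite nth_iota ?add0n => [/eqP //|].
by have := has_expn_eq1; rewrite has_find size_iota.
Qed.

Lemma expn_neq1_lt_ind k : 0 < k < ind m a -> a ^ k != 1 %[mod m].
Proof.
case: k => // k /= lt_k_ind.
have := before_find 0 lt_k_ind; rewrite nth_iota ?add0n => [->//|].
rewrite -ltnS; apply: leq_trans lt_k_ind _.
by rewrite ltnS -[X in _ <= X](size_iota 0 m) find_size.
Qed.

Lemma expn_modn_ind k : a ^ k = a ^ (k %% ind m a) %[mod m].
Proof.
rewrite {1}(divn_eq k (ind m a)) expnD [_ * ind m a]mulnC expnM -modnMml.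
by rewrite -modnXm ind_expn modnXm exp1n modnMml mul1n.
Qed.

Lemma ind_dvdn k : (ind m a %| k) = (a ^ k == 1 %[mod m]).
Proof.
rewrite expn_modn_ind /dvdn; apply/eqP/eqP => [-> // | a_mod].
apply/eqP; move/eqP: a_mod; apply: contraTT => k_ndvd.
by apply: expn_neq1_lt_ind; rewrite lt0n k_ndvd ltn_pmod.
Qed.

End Ind.

Lemma ind_subn m a : 0 < m -> a <= m -> coprime a m -> 4 %| ind m a ->
  ind m (m - a) = ind m a.
Proof.
move=> m_gt0 le_am co_a four_dvd.
have co_b : coprime (m - a) m by rewrite coprime_subn.
have expn_sym k : ~~ odd k -> (m - a) ^ k = a ^ k %[mod m] by exact: expn_subn_even.
have even_a : ~~ odd (ind m a) by rewrite -dvdn2 (dvdn_trans _ four_dvd).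
have even_b : ~~ odd (ind m (m - a)).
  have : ind m a %| (ind m (m - a)).*2.
    by rewrite ind_dvdn // -expn_sym ?odd_double // -ind_dvdn // -mul2n dvdn_mull.
  by move/(dvdn_trans four_dvd); rewrite -mul2n -[4]/(2 * 2) dvdn_pmul2l // dvdn2.
apply/eqP; rewrite eqn_dvd ind_dvdn // expn_sym // -ind_dvdn // dvdnn /=.
by rewrite ind_dvdn // -expn_sym // -ind_dvdn.
Qed.

Lemma sum_negclosed_mod m (P : pred nat) :
    ~~ P 0 -> (forall a, 0 < a < m -> P a -> P (m - a) && (a.*2 != m)) ->
  \sum_(a < m | P a) a = 0 %[mod m].
Proof.
move=> notP0 P_neg; rewrite -(big_mkord _ (fun a => a)).
case: m P_neg => [|m] P_neg; first by rewrite big_geq.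
set n := m.+1 in P_neg *.
rewrite big_ltn_cond // (negbTE notP0) (bigID (fun a => a.*2 < n)) /=.
have -> : \sum_(1 <= a < n | P a && ~~ (a.*2 < n)) a
          = \sum_(1 <= a < n | P a && (a.*2 < n)) (n - a).
  rewrite big_nat_rev add1n; apply: congr_big_nat => // a /andP[a_gt0 lt_an].
  rewrite subSS; have lt_bn : 0 < n - a < n by lia.
  have lt_a : 0 < a < n by rewrite a_gt0.
  case Pa: (P a); have := P_neg _ lt_bn.
  - have /andP[-> a_ne] := P_neg a lt_a Pa.
    by move=> _; move: a_ne; rewrite -!mul2n; lia.
  - by rewrite subKn ?Pa ?(ltnW lt_an) //; case: (P (n - a)) => // /(_ isT).
rewrite -big_split /=; apply/eqP; rewrite mod0n -[_ == 0]/(n %| _).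
by apply: dvdn_sum => a /andP[_ lt_2a]; rewrite subnKC //; lia.
Qed.

Lemma sum_negclosed_units m (P : pred nat) :
    2 < m -> (forall a, a < m -> P a -> coprime a m && P (m - a)) ->
  \sum_(a < m | P a) a = 0 %[mod m].
Proof.
move=> m_gt2 P_neg; apply: sum_negclosed_mod => [|a /andP[_ lt_am] Pa].
  apply/negP => /(P_neg 0 (ltnW (ltnW m_gt2)))/andP[co_0m _].
  by move: co_0m m_gt2; rewrite /coprime gcd0n => /eqP ->.
have /andP[co_am ->] := P_neg a lt_am Pa; apply/eqP => two_a.
by move: co_am m_gt2; rewrite -two_a /coprime -mul2n gcdnMl => /eqP ->.
Qed.

Lemma sum_ind_eq1 m : 0 < m ->
  \sum_(a < m | coprime a m && (ind m a == 1)) a = 1 %[mod m].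
Proof.
move=> m_gt0; have [m_le1 | m_gt1] := leqP m 1.
  by rewrite (_ : m = 1) ?modn1 //; lia.
rewrite (eq_bigl (fun a => a == Ordinal m_gt1)) ?big_pred1_eq // => a.
have [co_am | nco_am] /= := boolP (coprime a m).
  by rewrite -dvdn1 ind_dvdn // expn1 !modn_small.
by apply: esym; apply: contraNF nco_am => /eqP ->; exact: coprime1n.
Qed.

Lemma sum_ind_eq2 m : 2 < m ->
  \sum_(a < m | coprime a m && (ind m a == 2)) a + 1 = 0 %[mod m].
Proof.
move=> m_gt2; have m_gt0 : 0 < m := ltnW (ltnW m_gt2).
have sum_ind_dvd2 : \sum_(a < m | coprime a m && (ind m a %| 2)) a = 0 %[mod m].
  apply: (@sum_negclosed_units m (fun a => coprime a m && (ind m a %| 2))) => //.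
  move=> a /ltnW le_am /andP[co_am ind_a].
  have co_bm : coprime (m - a) m by rewrite coprime_subn.
  by rewrite co_am co_bm ind_dvdn // expn_subn_even // -ind_dvdn.
have dvdn2E d : (d %| 2) = (d == 1) || (d == 2).
  by case: d => [|[|[|d]]] //; rewrite gtnNdvd.
rewrite -sum_ind_dvd2 [in RHS](bigID (fun a : 'I_m => ind m a == 1)) /=.
have ind_dvd2_eq1 a : coprime a m && (ind m a %| 2) && (ind m a == 1)
                     = coprime a m && (ind m a == 1).
  by rewrite dvdn2E -andbA; case: eqP => _ /=; rewrite ?andbT ?andbF.
have ind_dvd2_neq1 a : coprime a m && (ind m a %| 2) && (ind m a != 1)
                      = coprime a m && (ind m a == 2).
  by rewrite dvdn2E -andbA; case: eqP => [-> | _] /=; rewrite ?andbT ?andbF.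
rewrite (eq_bigl _ _ (fun a : 'I_m => ind_dvd2_eq1 a)).
rewrite (eq_bigl _ _ (fun a : 'I_m => ind_dvd2_neq1 a)).
by rewrite addnC -modnDml -(sum_ind_eq1 m m_gt0) modnDml.
Qed.

Lemma sum_ind_mul4 m d : 2 < m -> 4 %| d ->
  \sum_(a < m | coprime a m && (ind m a == d)) a = 0 %[mod m].
Proof.
move=> m_gt2 four_d; have m_gt0 : 0 < m := ltnW (ltnW m_gt2).
apply: (@sum_negclosed_units m (fun a => coprime a m && (ind m a == d))) => //.
move=> a /ltnW le_am /andP[co_am /eqP ind_a].
by rewrite co_am coprime_subn // co_am ind_subn ?ind_a ?eqxx.
Qed.

Lemma carmichael_le2 m : m <= 2 -> carmichael m = 1.
Proof.
case: m => [|[|[|//]]] _ //; rewrite /carmichael /= (introT forallP) //.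
  by move=> a; rewrite !modn1 eqxx implybT.
by case=> [[|[|]]].
Qed.

Theorem theorem1p6 (m delta : nat) :
  0 < m -> 0 < delta -> delta %| carmichael m ->
  [/\ \sum_(a < m | coprime a m && (ind m a == 1)) (a : nat) = 1 %[mod m],
      (delta = 2 ->
        (\sum_(a < m | coprime a m && (ind m a == 2)) (a : nat)) + 1 = 0 %[mod m])
    & (4 %| delta ->
        \sum_(a < m | coprime a m && (ind m a == delta)) (a : nat) = 0 %[mod m])].
Proof.
move=> m_gt0 d_gt0 d_dvd.
have m_gt2 : 1 < delta -> 2 < m.
  move=> d_gt1; rewrite ltnNge; apply/negP => /carmichael_le2 lambda1.
  by move: d_dvd d_gt1; rewrite lambda1 dvdn1 => /eqP ->.
split; first exact: sum_ind_eq1.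
  by move=> d2; apply: sum_ind_eq2; apply: m_gt2; rewrite d2.
move=> four_d; apply: sum_ind_mul4 => //; apply: m_gt2.
exact: leq_trans (dvdn_leq d_gt0 four_d).
Qed.
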